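(* Let $V$ be the value function defined in the context (the limit of relative value iteration). For any $\mathbf Q^1,\mathbf Q^2\in\mathcal Q$ with $\mathbf Q^2\succeq\mathbf Q^1$ (componentwise $\ge$), we have $V(\mathbf Q^2)\ge V(\mathbf Q^1)$.
   Context: Model. Let $N\ge 1$, $\mathcal N=\{0,1,\dots,N\}$ (base station $0$ is the macro base station, MBS) and $\mathcal N^+=\{1,\dots,N\}$ (small base stations, SBSs). Let $\mathcal M=\{1,\dots,M\}$ be the set of contents. For each $n\in\mathcal N$ let $\mathcal M_n\subseteq\mathcal M$ be the set of contents cached at BS $n$, with $\mathcal M_0=\mathcal M$; put $\tilde{\mathcal M}_n=\mathcal M_n\cup\{0\}$ and $\mathcal N_m=\{n\in\mathcal N^+: m\in\mathcal M_n\}$. Powers $p(n,m)\ge 0$ are given for $n\in\mathcal N$, $m\in\mathcal M_n$, and $p(n,0)=0$. A weight $w\ge 0$ is fixed. The feasible action space is $\mathcal U=\{\mathbf u=(u_n)_{n\in\mathcal N}: u_n\in\tilde{\mathcal M}_n\ \forall n,\ u_0\sum_{n\in\mathcal N^+}u_n=0\}$. A state is $\mathbf Q=(Q_{n,m})_{n\in\mathcal N,m\in\mathcal M_n}$ with $Q_{n,m}\in\mathcal Q_{n,m}=\{0,1,\dots,N_{n,m}\}$ for given positive integers $N_{n,m}$; $\mathcal Q=\prod_{n\in\mathcal N}\prod_{m\in\mathcal M_n}\mathcal Q_{n,m}$. Arrivals $A_{n,m}$ ($n\in\mathcal N$, $m\in\mathcal M$) are mutually independent nonnegative-integer random variables with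 fixed distributions, i.i.d. across time slots; $\tilde A_{0,m}=A_{0,m}+\sum_{n\in\mathcal N^+\setminus\mathcal N_m}A_{n,m}$. Given state $\mathbf Q$ and action $\mathbf u$, the next state $\mathbf Q'$ is $Q'_{0,m}=\min\{\mathbf 1(u_0\neq m)Q_{0,m}+\tilde A_{0,m},N_{0,m}\}$ for $m\in\mathcal M_0$ and $Q'_{n,m}=\min\{\mathbf 1(u_0\neq m\text{ and }u_n\neq m)Q_{n,m}+A_{n,m},N_{n,m}\}$ for $n\in\mathcal N^+$, $m\in\mathcal M_n$; $\mathbb E$ denotes expectation over the arrivals. The per-stage cost is $g(\mathbf Q,\mathbf u)=d(\mathbf Q)+w\,p(\mathbf u)$ with $d(\mathbf Q)=\sum_{n\in\mathcal N}\sum_{m\in\mathcal M_n}Q_{n,m}$ and $p(\mathbf u)=\sum_{n\in\mathcal N}p(n,u_n)$. Value function. Fix a reference state $\mathbf Q^\dagger\in\mathcal Q$. Relative value iteration: $V_0\equiv 0$, $J_{l+1}(\mathbf Q,\mathbf u)=g(\mathbf Q,\mathbf u)+\mathbb E[V_l(\mathbf Q')]$, and $V_{l+1}(\mathbf Q)=\min_{\mathbf u\in\mathcal U}J_{l+1}(\mathbf Q,\mathbf u)-\min_{\mathbf u\in\mathcal U}J_{l+1}(\mathbf Q^\dagger,\mathbf u)$ for $l\ge0$. It is assumed (standing assumption of the paper, guaranteed under its unichain conditions) that $V_l$ converges pointwise to a function $V:\mathcal Q\to\mathbb R$; this $V$ is the value function, which solves the Bellman equation $\theta+V(\mathbf Q)=\min_{\mathbf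 u\in\mathcal U}\{g(\mathbf Q,\mathbf u)+\mathbb E[V(\mathbf Q')]\}$ for all $\mathbf Q$. *)

From Stdlib Require Import Reals List Arith Classical ClassicalEpsilon.
Import ListNotations.
Open Scope bool_scope.
Open Scope R_scope.

(* Parameters of the cache-enabled network model.
   Indices: BS n in {0..NB} (0 = MBS), contents m in {1..MC}. *)
Record Model := {
  NB : nat;
  MC : nat;
  cached : nat -> nat -> bool;     (* cached n m  <->  m in M_n  (n >= 1) *)
  pw : nat -> nat -> R;
  wt : R;
  cap : nat -> nat -> nat;
  pmf : nat -> nat -> nat -> R     (* pmf n m k = P(A_{n,m} = k) *)
}.

(* m in M_n ; M_0 = M by definition *)
Definition inM (md : Model) (n m : nat) : bool :=
  Nat.leb 1 m && Nat.leb m (MC md) && (Nat.eqb n 0 || cached md n m).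

Definition inDom (md : Model) (n m : nat) : Prop :=
  (n <= NB md)%nat /\ inM md n m = true.

Definition state := nat -> nat -> nat.

(* Q in the state space: 0 <= Q_{n,m} <= N_{n,m} on the domain, and
   (canonical representation) 0 off the domain. *)
Definition inQ (md : Model) (Q : state) : Prop :=
  forall n m, (inDom md n m -> (Q n m <= cap md n m)%nat) /\
              (~ inDom md n m -> Q n m = 0%nat).

Definition model_wf (md : Model) : Prop :=
  (1 <= NB md)%nat /\
  0 <= wt md /\
  (forall n, (n <= NB md)%nat -> pw md n 0 = 0) /\
  (forall n m, inDom md n m -> 0 <= pw md n m) /\
  (forall n m, inDom md n m -> (1 <= cap md n m)%nat) /\
  (forall n m k, 0 <= pmf md n m k) /\
  (forall n m, (n <= NB md)%nat -> (1 <= m <= MC md)%nat ->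
      infinite_sum (pmf md n m) 1).

(* an action is the list [u_0; ...; u_N]; u_n = nth n u 0 *)
Definition act (u : list nat) (n : nat) : nat := nth n u 0%nat.

Definition candidates (md : Model) (n : nat) : list nat :=
  0%nat :: filter (fun m => inM md n m) (seq 1 (MC md)).

Fixpoint vecs (cs : list (list nat)) : list (list nat) :=
  match cs with
  | [] => [[]]
  | c :: cs' => flat_map (fun x => map (cons x) (vecs cs')) c
  end.

Definition feasible (md : Model) (u : list nat) : bool :=
  Nat.eqb (act u 0 * list_sum (map (act u) (seq 1 (NB md)))) 0.

Definition actions (md : Model) : list (list nat) :=
  filter (feasible md) (vecs (map (candidates md) (seq 0 (S (NB md))))).

Definition zero_action (md : Model) : list nat := repeat 0%nat (S (NB md)).

(* min over U of f (the zero action belongs to U) *)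
Definition minU (md : Model) (f : list nat -> R) : R :=
  fold_right (fun u acc => Rmin (f u) acc) (f (zero_action md)) (actions md).

Definition sumR (l : list nat) (f : nat -> R) : R :=
  fold_right (fun i acc => f i + acc) 0 l.

Definition dcost (md : Model) (Q : state) : R :=
  sumR (seq 0 (S (NB md))) (fun n =>
    sumR (seq 1 (MC md)) (fun m =>
      if inM md n m then INR (Q n m) else 0)).

Definition pcost (md : Model) (u : list nat) : R :=
  sumR (seq 0 (S (NB md))) (fun n => pw md n (act u n)).

Definition gcost (md : Model) (Q : state) (u : list nat) : R :=
  dcost md Q + wt md * pcost md u.

(* a n m = realized arrival A_{n,m} *)
Definition next_state (md : Model) (Q : state) (u : list nat)
    (a : nat -> nat -> nat) : state :=
  fun n m =>
    if Nat.leb n (NB md) && inM md n m then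
      if Nat.eqb n 0 then
        Nat.min ((if Nat.eqb (act u 0) m then 0 else Q 0%nat m) + a 0%nat m
                 + list_sum (map (fun k => if cached md k m then 0%nat else a k m)
                                 (seq 1 (NB md))))
                (cap md 0 m)
      else
        Nat.min ((if Nat.eqb (act u 0) m || Nat.eqb (act u n) m then 0 else Q n m)
                 + a n m)
                (cap md n m)
    else 0%nat.

(* value of a convergent series (0 if it does not converge) *)
Definition series_val (s : nat -> R) : R :=
  match excluded_middle_informative (exists l, infinite_sum s l) with
  | left H => proj1_sig (constructive_indefinite_description _ H)
  | right _ => 0
  end.

Definition upd (a : nat -> nat -> nat) (n m k : nat) : nat -> nat -> nat :=
  fun n' m' => if Nat.eqb n' n && Nat.eqb m' m then k else a n' m'.

(* iterated expectation: E[F(A)] = sum_{k1} P(A_{i1}=k1) sum_{k2} ... F *)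
Fixpoint Eidx (md : Model) (idx : list (nat * nat))
    (F : (nat -> nat -> nat) -> R) : R :=
  match idx with
  | [] => F (fun _ _ => 0%nat)
  | (n, m) :: rest =>
      series_val (fun k =>
        pmf md n m k * Eidx md rest (fun a => F (upd a n m k)))
  end.

Definition arr_idx (md : Model) : list (nat * nat) :=
  flat_map (fun n => map (fun m => (n, m)) (seq 1 (MC md))) (seq 0 (S (NB md))).

Definition Exp (md : Model) (F : (nat -> nat -> nat) -> R) : R :=
  Eidx md (arr_idx md) F.

Definition Jfun (md : Model) (Vprev : state -> R) (Q : state) (u : list nat) : R :=
  gcost md Q u + Exp md (fun a => Vprev (next_state md Q u a)).

Fixpoint RVI (md : Model) (Qref : state) (l : nat) : state -> R :=
  match l with
  | O => fun _ => 0
  | S l' => fun Q =>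
      minU md (Jfun md (RVI md Qref l') Q) - minU md (Jfun md (RVI md Qref l') Qref)
  end.

Definition state_ge (md : Model) (Q2 Q1 : state) : Prop :=
  forall n m, inDom md n m -> (Q1 n m <= Q2 n m)%nat.

(* Every relative value iterate V_l is monotone in the state, by induction on l:
   the holding cost d is monotone, for fixed action and arrivals the next state is
   monotone in the current one, and both the expectation over the arrivals and the
   minimum over actions preserve pointwise inequalities (the reference term is the
   same constant on both sides).  A monotone iterate is bounded on the finite state
   space by its values at the empty and the full state, which makes every series in
   the expectation absolutely convergent.  Finally non-strict inequalities pass to
   the limit V. *)

From Stdlib Require Import Reals.
From Stdlib Require Import List Lia Lra ClassicalEpsilon.
From Coquelicot Require Import Coquelicot.
Open Scope R_scope.

Lemma series_val_unique s l : infinite_sum s l -> series_val s = l.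
Proof.
  intro Hsl; unfold series_val.
  destruct excluded_middle_informative as [Hex | Hnex].
  - destruct (constructive_indefinite_description _ Hex) as [l' Hl']; simpl.
    exact (uniqueness_sum _ _ _ Hl' Hsl).
  - exfalso; apply Hnex; exists l; exact Hsl.
Qed.

Lemma series_val_Series s : ex_series s -> series_val s = Series s.
Proof.
  intro Hs; apply series_val_unique, is_series_Reals, Series_correct, Hs.
Qed.

Lemma Series_le_ex (a b : nat -> R) :
  (forall k, a k <= b k) -> ex_series a -> ex_series b -> Series a <= Series b.
Proof.
  intros Hab Ha Hb.
  assert (Hdiff : 0 <= Series (fun k => b k - a k)).
  { replace 0 with (Series (fun k => 0 * b k)) by (rewrite Series_scal_l; ring).
    apply Series_le; [intro k; specialize (Hab k); lra|].
    exact (ex_series_minus _ _ Hb Ha). }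
  rewrite Series_minus in Hdiff by assumption; lra.
Qed.

Section ProbabilityWeights.

Variable p : nat -> R.
Hypothesis p_ge0 : forall k, 0 <= p k.
Hypothesis p_sum1 : infinite_sum p 1.

Lemma ex_series_weighted (e : nat -> R) B :
  (forall k, Rabs (e k) <= B) -> ex_series (fun k => p k * e k).
Proof.
  intro He.
  apply (@ex_series_le R_AbsRing R_CompleteNormedModule _ (fun k => B * p k)).
  - intro k; change (Rabs (p k * e k) <= B * p k).
    rewrite Rabs_mult, (Rabs_right (p k)) by (apply Rle_ge, p_ge0).
    rewrite Rmult_comm; apply Rmult_le_compat_r; auto.
  - apply (ex_series_scal_l B p); exists 1; apply is_series_Reals, p_sum1.
Qed.

Lemma series_val_weighted_const c : series_val (fun k => p k * c) = c.
Proof.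
  apply series_val_unique, is_series_Reals.
  pose proof (is_series_scal_r c _ _ (proj2 (is_series_Reals p 1) p_sum1)) as Hc.
  rewrite Rmult_1_l in Hc; exact Hc.
Qed.

Lemma series_val_weighted_le (e1 e2 : nat -> R) B :
  (forall k, Rabs (e1 k) <= B) -> (forall k, Rabs (e2 k) <= B) ->
  (forall k, e1 k <= e2 k) ->
  series_val (fun k => p k * e1 k) <= series_val (fun k => p k * e2 k).
Proof.
  intros He1 He2 Hle.
  rewrite !series_val_Series by (eapply ex_series_weighted; eassumption).
  apply Series_le_ex; try (eapply ex_series_weighted; eassumption).
  intro k; apply Rmult_le_compat_l; auto.
Qed.

Lemma series_val_weighted_bound (e : nat -> R) B :
  (forall k, Rabs (e k) <= B) -> Rabs (series_val (fun k => p k * e k)) <= B.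
Proof.
  intro He.
  assert (HB : 0 <= B) by (apply Rle_trans with (Rabs (e 0%nat)); [apply Rabs_pos | apply He]).
  apply Rabs_le; split.
  - rewrite <- (series_val_weighted_const (- B)).
    apply (series_val_weighted_le _ _ B); intro k; simpl; auto.
    + rewrite Rabs_Ropp, Rabs_right; lra.
    + specialize (He k); apply Rabs_le_between in He; lra.
  - rewrite <- (series_val_weighted_const B).
    apply (series_val_weighted_le _ _ B); intro k; simpl; auto.
    + rewrite Rabs_right; lra.
    + specialize (He k); apply Rabs_le_between in He; lra.
Qed.

End ProbabilityWeights.

Section Expectation.

Variable md : Model.
Hypothesis Hwf : model_wf md.

Definition arrival_indices (idx : list (nat * nat)) : Prop :=
  forall n m, In (n, m) idx -> (n <= NB md)%nat /\ (1 <= m <= MC md)%nat.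

Lemma arrival_indices_cons n m idx :
  arrival_indices ((n, m) :: idx) ->
  arrival_indices idx /\ (forall k, 0 <= pmf md n m k) /\ infinite_sum (pmf md n m) 1.
Proof.
  intro Hidx; destruct Hwf as (_ & _ & _ & _ & _ & Hpmf & Hsum).
  destruct (Hidx n m (or_introl eq_refl)) as [Hn Hm].
  split; [intros n' m' Hin; apply Hidx; right; exact Hin |].
  split; [apply Hpmf | apply Hsum; assumption].
Qed.

Lemma Eidx_bound idx : arrival_indices idx ->
  forall F B, (forall a, Rabs (F a) <= B) -> Rabs (Eidx md idx F) <= B.
Proof.
  induction idx as [|[n m] idx IH]; intros Hidx F B HF; simpl; auto.
  destruct (arrival_indices_cons _ _ _ Hidx) as (Hidx' & Hpmf & Hsum).
  apply series_val_weighted_bound; auto.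
Qed.

Lemma Eidx_le idx : arrival_indices idx ->
  forall F G B, (forall a, Rabs (F a) <= B) -> (forall a, Rabs (G a) <= B) ->
  (forall a, F a <= G a) -> Eidx md idx F <= Eidx md idx G.
Proof.
  induction idx as [|[n m] idx IH]; intros Hidx F G B HF HG Hle; simpl; auto.
  destruct (arrival_indices_cons _ _ _ Hidx) as (Hidx' & Hpmf & Hsum).
  apply (series_val_weighted_le _ Hpmf Hsum _ _ B); intro k.
  - apply Eidx_bound; auto.
  - apply Eidx_bound; auto.
  - apply (IH Hidx' _ _ B); auto.
Qed.

Lemma arrival_indices_arr_idx : arrival_indices (arr_idx md).
Proof.
  intros n m Hin; unfold arr_idx in Hin.
  apply in_flat_map in Hin as [n' [Hn Hm]].
  apply in_map_iff in Hm as [m' [Enm Hm]]; injection Enm as <- <-.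
  apply in_seq in Hn; apply in_seq in Hm; lia.
Qed.

Lemma Exp_le F G B : (forall a, Rabs (F a) <= B) -> (forall a, Rabs (G a) <= B) ->
  (forall a, F a <= G a) -> Exp md F <= Exp md G.
Proof. apply Eidx_le, arrival_indices_arr_idx. Qed.

End Expectation.

Definition state_monotone (md : Model) (V : state -> R) : Prop :=
  forall Q1 Q2, state_ge md Q2 Q1 -> V Q1 <= V Q2.

Lemma next_state_inQ md Q u a : inQ md (next_state md Q u a).
Proof.
  intros n m; unfold next_state; split.
  - intros [Hn Hm].
    rewrite Hm, (proj2 (Nat.leb_le _ _) Hn); simpl.
    destruct (Nat.eqb n 0) eqn:En; [apply Nat.eqb_eq in En; subst|]; lia.
  - intros Hdom.
    destruct (Nat.leb n (NB md) && inM md n m)%bool eqn:E; auto.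
    exfalso; apply Hdom; apply andb_prop in E as [En Em].
    split; [apply Nat.leb_le|]; assumption.
Qed.

Lemma next_state_mono md Q1 Q2 u a : state_ge md Q2 Q1 ->
  state_ge md (next_state md Q2 u a) (next_state md Q1 u a).
Proof.
  intros HQ n m _; unfold next_state.
  destruct (Nat.leb n (NB md) && inM md n m)%bool eqn:E; auto.
  apply andb_prop in E as [En Em]; apply Nat.leb_le in En.
  assert (HQnm : (Q1 n m <= Q2 n m)%nat) by (apply HQ; split; assumption).
  destruct (Nat.eqb n 0) eqn:En0.
  - apply Nat.eqb_eq in En0; subst; destruct (Nat.eqb (act u 0) m); lia.
  - destruct (Nat.eqb (act u 0) m || Nat.eqb (act u n) m)%bool; lia.
Qed.

Lemma sumR_le l f g : (forall i, In i l -> f i <= g i) -> sumR l f <= sumR l g.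
Proof.
  induction l as [|i l IH]; simpl; intro Hfg; [lra|].
  apply Rplus_le_compat; auto.
Qed.

Lemma dcost_mono md : state_monotone md (dcost md).
Proof.
  intros Q1 Q2 HQ; unfold dcost.
  apply sumR_le; intros n Hn; apply in_seq in Hn.
  apply sumR_le; intros m _.
  destruct (inM md n m) eqn:Em; [|lra].
  apply le_INR, HQ; split; [lia | exact Em].
Qed.

Lemma minU_le md f g : (forall u, f u <= g u) -> minU md f <= minU md g.
Proof.
  intro Hfg; unfold minU.
  induction (actions md) as [|u us IH]; simpl; auto.
  apply Rmin_glb; [apply Rle_trans with (f u); [apply Rmin_l | apply Hfg]|].
  apply Rle_trans with (fold_right (fun u acc => Rmin (f u) acc) (f (zero_action md)) us);
    [apply Rmin_r | exact IH].
Qed.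

Lemma state_monotone_bound md V Q : state_monotone md V -> inQ md Q ->
  Rabs (V Q) <= Rmax (Rabs (V (fun _ _ => 0%nat))) (Rabs (V (cap md))).
Proof.
  intros HV HQ.
  assert (Hlo : V (fun _ _ => 0%nat) <= V Q) by (apply HV; intros n m _; lia).
  assert (Hhi : V Q <= V (cap md)) by (apply HV; intros n m Hdom; apply (HQ n m), Hdom).
  apply Rabs_le; split.
  - pose proof (Rmax_l (Rabs (V (fun _ _ => 0%nat))) (Rabs (V (cap md)))).
    pose proof (Rabs_maj2 (V (fun _ _ => 0%nat))).
    lra.
  - pose proof (Rmax_r (Rabs (V (fun _ _ => 0%nat))) (Rabs (V (cap md)))).
    pose proof (RRle_abs (V (cap md))).
    lra.
Qed.

Lemma RVI_mono md (Hwf : model_wf md) Qref l : state_monotone md (RVI md Qref l).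
Proof.
  induction l as [|l IH]; intros Q1 Q2 HQ; simpl; [lra|].
  apply Rplus_le_compat_r, minU_le; intro u; unfold Jfun, gcost.
  apply Rplus_le_compat; [apply Rplus_le_compat_r, dcost_mono, HQ|].
  apply (Exp_le md Hwf _ _
           (Rmax (Rabs (RVI md Qref l (fun _ _ => 0%nat))) (Rabs (RVI md Qref l (cap md)))));
    intro a.
  - apply state_monotone_bound, next_state_inQ; exact IH.
  - apply state_monotone_bound, next_state_inQ; exact IH.
  - apply IH, next_state_mono, HQ.
Qed.

Theorem lemma2 (md : Model) (Hwf : model_wf md)
  (Qref : state) (HQref : inQ md Qref)
  (V : state -> R)
  (Hconv : forall Q, inQ md Q -> Un_cv (fun l => RVI md Qref l Q) (V Q)) :
  forall Q1 Q2 : state, inQ md Q1 -> inQ md Q2 -> state_ge md Q2 Q1 ->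
    V Q2 >= V Q1.
Proof.
  intros Q1 Q2 HQ1 HQ2 HQ; apply Rle_ge.
  exact (Rle_cv_lim (fun l => RVI_mono md Hwf Qref l Q1 Q2 HQ) (Hconv Q1 HQ1)
           (Hconv Q2 HQ2)).
Qed.
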